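(* Let $\lambda \geq 2$ be an integer and let $H$ be a graph with $\lambda^2+2$ vertices having at least one isolated vertex. Then $\lambda_{\min}(\mathfrak{q}(H)) < -\lambda$.
   Context: A Hoffman graph is a graph whose vertices are labelled ''fat'' or ''slim'', such that fat vertices are pairwise non-adjacent and each fat vertex has at least one slim neighbour. If $A_s$ is the adjacency matrix of the subgraph induced on the slim vertices and $C$ is the slim-by-fat adjacency matrix, the special matrix is $S = A_s - CC^T$, and the eigenvalues of the Hoffman graph are those of $S$; $\lambda_{\min}$ denotes the smallest one. For a graph $H$, $\mathfrak{q}(H)$ is the Hoffman graph whose slim vertices induce $H$ and which has a single fat vertex adjacent to all vertices of $H$ (so its special matrix is $A(H) - J$, with $J$ the all-ones matrix). *)

From mathcomp Require Import all_boot all_order all_algebra.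
From mathcomp Require Import reals.
Set Implicit Arguments. Unset Strict Implicit. Unset Printing Implicit Defensive.
Import Order.TTheory GRing.Theory Num.Theory.
Local Open Scope ring_scope.

Definition simple_graph (n : nat) (e : rel 'I_n) : Prop :=
  (forall i, ~~ e i i) /\ (forall i j, e i j = e j i).

Definition isolated (n : nat) (e : rel 'I_n) (v : 'I_n) : Prop :=
  forall u, ~~ e v u.

Definition adjmx (R : nzRingType) (n : nat) (e : rel 'I_n) : 'M[R]_n :=
  \matrix_(i, j) (e i j)%:R.

(* special matrix of the Hoffman graph q(H): A(H) - J *)
Definition q_special (R : nzRingType) (n : nat) (e : rel 'I_n) : 'M[R]_n :=
  adjmx R e - const_mx 1.

Definition is_lambda_min (R : realType) (n : nat) (S : 'M[R]_n) (m : R) : Prop :=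
  eigenvalue S m /\ (forall a, eigenvalue S a -> m <= a).

(* Test S = A(H) - J against the vector x equal to lam on an isolated vertex v
   and to 1 elsewhere.  Row and column v of A(H) vanish and A(H) <= J
   entrywise, so x S x^T <= N^2 - (lam + N)^2 with N = lam^2 + 1, which is
   below -lam |x|^2 = -lam (lam^2 + N) by lam^2 + lam.  By the Rayleigh
   principle S then has an eigenvalue below -lam, and a least eigenvalue
   exists because the eigenvalues are the finitely many roots of the
   characteristic polynomial. *)

From mathcomp Require Import all_boot all_order all_algebra.
From mathcomp Require Import reals.
From mathcomp Require Import complex polyrcf.
From mathcomp Require Import lra.
Set Implicit Arguments.
Unset Strict Implicit.
Unset Printing Implicit Defensive.
Import Order.TTheory GRing.Theory Num.Theory.
Local Open Scope ring_scope.

Section MinEigenvalue.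
Variables (R : rcfType) (n : nat) (M : 'M[R]_n).

Lemma exists_min_eigenvalue a : eigenvalue M a ->
  exists m, eigenvalue M m /\ forall b, eigenvalue M b -> m <= b.
Proof.
move=> eMa; have roots_char := roots_on_rootsR (monic_neq0 (char_poly_monic M)).
have eig_roots b : eigenvalue M b = (b \in rootsR (char_poly M)).
  by rewrite eigenvalue_root_char -roots_char in_itv.
exists (\big[Order.min/a]_(r <- rootsR (char_poly M)) r); split.
  rewrite big_seq; apply: (big_ind (eigenvalue M)) => // [y z ey ez|r].
    by rewrite minEle; case: ifP.
  by rewrite eig_roots.
by move=> b; rewrite eig_roots => rb; exact: ge_bigmin_seq.
Qed.

End MinEigenvalue.

Section Rayleigh.
Local Open Scope sesquilinear_scope.

Lemma diag_form_ge (C : numClosedFieldType) n (d y : 'rV[C]_n) c :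
  (forall i, c <= d 0 i) -> c * (y *m y^t*) 0 0 <= (y *m diag_mx d *m y^t*) 0 0.
Proof.
move=> ge_c; rewrite !mxE mulr_sumr; apply: ler_sum => k _.
rewrite mul_mx_diag !mxE mulrAC [_ * d 0 k]mulrC.
by apply: ler_wpM2r; [exact: mul_conjC_ge0 | exact: ge_c].
Qed.

(* The spectral theorem is only available over a numClosedFieldType, so a
   real symmetric matrix is diagonalised as a hermitian matrix over R[i]. *)
Variable R : rcfType.
Local Notation toC := (real_complex R).

Lemma map_real_complex_realmx p q (A : 'M[R]_(p, q)) :
  map_mx toC A \is a realmx.
Proof.
by apply/mxOverP => i j; rewrite mxE; apply/complex_realP; exists (A i j).
Qed.

Lemma map_real_complex_adjoint p q (A : 'M[R]_(p, q)) :
  (map_mx toC A)^t* = map_mx toC A^T.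
Proof. by rewrite map_trmx realmxC ?map_real_complex_realmx. Qed.

Variables (n : nat) (M : 'M[R]_n).
Hypothesis Msym : M^T = M.

Local Notation MC := (map_mx toC M).
Local Notation P := (spectralmx MC).
Local Notation d := (spectral_diag MC).

Lemma map_real_complex_hermitian : MC \is hermsymmx.
Proof.
apply: realsym_hermsym; last exact: map_real_complex_realmx.
by apply/is_hermitianmxP; rewrite expr0 scale1r map_mx_id // map_trmx Msym.
Qed.

Lemma map_real_complex_spectral : MC = P^t* *m diag_mx d *m P.
Proof.
rewrite -invmx_unitary ?spectral_unitarymx //.
exact/orthomx_spectralP/hermitian_normalmx/map_real_complex_hermitian.
Qed.

Lemma spectralmx_mul : P *m MC = diag_mx d *m P.
Proof.
have /unitarymxP PPt := spectral_unitarymx MC.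
by rewrite [X in _ *m X]map_real_complex_spectral !mulmxA PPt mul1mx.
Qed.

Lemma spectral_diag_eigenvalue i : exists2 r, d 0 i = toC r & eigenvalue M r.
Proof.
have /complex_realP [r dr] : d 0 i \is Num.real.
  exact: mxOverP (hermitian_spectral_diag_real map_real_complex_hermitian) _ _.
exists r => //; rewrite -(eigenvalue_map toC).
suff: eigenvalue MC (d 0 i) by rewrite dr.
apply/eigenvalueP; exists (row i P).
  by rewrite -row_mul spectralmx_mul row_mul row_diag_mx -scalemxAl -rowE.
have /row_unitarymxP/(_ i i) := spectral_unitarymx MC.
by apply: contra_eq_neq => ->; rewrite dotmxE mul0mx mxE eqxx eq_sym oner_neq0.
Qed.

Lemma form_ge_of_spectral_diag_ge (x : 'rV[R]_n) c :
  (forall i, toC c <= d 0 i) -> c * (x *m x^T) 0 0 <= (x *m M *m x^T) 0 0.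
Proof.
move=> ge_c; pose y := (map_mx toC x) *m P^t*.
have /unitarymxP PPt := spectral_unitarymx MC.
have PtP : P^t* *m P = 1%:M.
  by rewrite -invmx_unitary ?spectral_unitarymx // mulVmx ?spectral_unit.
have yDy : map_mx toC (x *m M *m x^T) = y *m diag_mx d *m y^t*.
  rewrite !map_mxM -map_real_complex_adjoint {1}map_real_complex_spectral.
  by rewrite /y trmx_mul map_mxM trmxCK !mulmxA.
have yy : map_mx toC (x *m x^T) = y *m y^t*.
  rewrite map_mxM -map_real_complex_adjoint /y trmx_mul map_mxM trmxCK.
  by rewrite mulmxA -(mulmxA (map_mx toC x)) PtP mulmx1.
have entry (A : 'M_1) : toC (A 0 0) = map_mx toC A 0 0 by rewrite mxE.
by rewrite -lecR rmorphM /= !entry yDy yy; exact: diag_form_ge.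
Qed.

Lemma eigenvalue_lt_of_form_lt (x : 'rV[R]_n) c :
  (x *m M *m x^T) 0 0 < c * (x *m x^T) 0 0 -> exists2 a, eigenvalue M a & a < c.
Proof.
move=> lt_form; have [i lt_di] : exists i, ~~ (toC c <= d 0 i).
  apply/existsP; rewrite -negb_forall; apply: contraTN lt_form => /forallP ge_c.
  by rewrite -leNgt form_ge_of_spectral_diag_ge.
have [r dr eMr] := spectral_diag_eigenvalue i.
by exists r => //; rewrite ltNge -lecR -dr.
Qed.

End Rayleigh.

Lemma mulmx_form (R : pzSemiRingType) n (x y : 'rV[R]_n) (A : 'M[R]_n) :
  (x *m A *m y^T) 0 0 = \sum_i \sum_j x 0 i * A i j * y 0 j.
Proof.
rewrite mxE; under eq_bigr => j _ do rewrite !mxE mulr_suml.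
exact: exchange_big.
Qed.

Lemma const1_form (R : comPzSemiRingType) n (x : 'rV[R]_n) :
  (x *m const_mx 1 *m x^T) 0 0 = (\sum_i x 0 i) ^+ 2.
Proof.
rewrite mulmx_form expr2 mulr_suml; apply: eq_bigr => i _.
by rewrite mulr_sumr; apply: eq_bigr => j _; rewrite mxE mulr1.
Qed.

Lemma sum_if_eq (V : nmodType) n (v : 'I_n.+1) (a b : V) :
  \sum_j (if j == v then a else b) = a + b *+ n.
Proof.
rewrite (bigD1 v) //= eqxx; congr (_ + _).
rewrite (eq_bigr (fun=> b)) => [|j /negbTE -> //].
by rewrite sumr_const cardC1 card_ord.
Qed.

Lemma tr_q_special (R : nzRingType) n (e : rel 'I_n) :
  (forall i j, e i j = e j i) -> (q_special R e)^T = q_special R e.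
Proof. by move=> esym; apply/matrixP => i j; rewrite !mxE esym. Qed.

Definition spike_row {R : nzRingType} {n} (v : 'I_n) (t : R) : 'rV[R]_n :=
  \row_j (if j == v then t else 1).

Section SpikeRow.
Variables (R : numDomainType) (n : nat) (v : 'I_n.+1).
Local Notation x t := (@spike_row R _ v t).

Lemma sum_spike_row t : \sum_j x t 0 j = t + n%:R.
Proof. by under eq_bigr do rewrite mxE; rewrite sum_if_eq. Qed.

Lemma spike_row_norm t : (x t *m (x t)^T) 0 0 = t ^+ 2 + n%:R.
Proof.
have sq j : x t 0 j * (x t)^T j 0 = if j == v then t ^+ 2 else 1.
  by rewrite !mxE; case: ifP; rewrite ?mulr1.
by rewrite mxE (eq_bigr _ (fun j _ => sq j)) sum_if_eq.
Qed.

Variable e : rel 'I_n.+1.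
Hypotheses (esym : forall i j, e i j = e j i) (v_isolated : isolated e v).

Lemma adjmx_form_spike_row t : (x t *m adjmx R e *m (x t)^T) 0 0 <= n%:R ^+ 2.
Proof.
have entry i j :
    x t 0 i * adjmx R e i j * x t 0 j <= x 0 0 i * const_mx 1 i j * x 0 0 j.
  rewrite !mxE; have [->|iv] := eqVneq i v.
    by rewrite (negbTE (v_isolated j)) !mulr0 !mul0r.
  have [->|jv] := eqVneq j v.
    by rewrite esym (negbTE (v_isolated i)) !(mulr0, mul0r).
  by rewrite !mulr1 !mul1r lern1 leq_b1.
rewrite -[n%:R]add0r -(sum_spike_row 0) -const1_form !mulmx_form.
by apply: ler_sum => i _; apply: ler_sum => j _; exact: entry.
Qed.

Lemma q_special_form_spike_row t :
  (x t *m q_special R e *m (x t)^T) 0 0 <= n%:R ^+ 2 - (t + n%:R) ^+ 2.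
Proof.
rewrite /q_special mulmxBr mulmxBl [X in X <= _]mxE [X in _ + X <= _]mxE.
by rewrite const1_form sum_spike_row lerD2r adjmx_form_spike_row.
Qed.

End SpikeRow.

Lemma q_special_has_eigenvalue_lt (R : rcfType) lam
    (e : rel 'I_(lam ^ 2 + 1).+1) :
  (0 < lam)%N -> (forall i j, e i j = e j i) -> (exists v, isolated e v) ->
  exists2 a, eigenvalue (q_special R e) a & a < - lam%:R.
Proof.
move=> lam_gt0 esym [v v_isolated].
apply: (eigenvalue_lt_of_form_lt (tr_q_special R esym)
  (x := spike_row v lam%:R)).
apply: le_lt_trans (q_special_form_spike_row esym v_isolated _) _.
have : (0 : R) < lam%:R by rewrite ltr0n.
rewrite spike_row_norm natrD natrX; nra.
Qed.

Theorem mainTheorem3 (R : realType) (lam : nat) (e : rel 'I_(lam ^ 2 + 2))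
  (hlam : (2 <= lam)%N) (hH : simple_graph e)
  (hiso : exists v, isolated e v) :
  exists m : R, is_lambda_min (q_special R e) m /\ m < - (lam%:R).
Proof.
(* addn recurses on its first argument: 'I_(lam ^ 2 + 2) is not convertible
   to 'I_(lam ^ 2 + 1).+1. *)
case: hH => _ esym; move: e esym hiso; rewrite addnS => e esym hiso.
have [a eSa a_lt] := q_special_has_eigenvalue_lt R (ltnW hlam) esym hiso.
have [m [eSm m_min]] := exists_min_eigenvalue eSa.
by exists m; split => //; exact: le_lt_trans (m_min a eSa) a_lt.
Qed.
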